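(* Let $f:D\to\{0,1\}$, $D\subseteq\{0,1\}^n$, be a non-constant $n$-bit partial Boolean function. Then $f$ can be computed exactly by a quantum 1-query algorithm if and only if there exists a degree-1 SOS complex representation matrix $A$ of $f$ and $\bar f$ such that $A^\dagger A=\mathrm{diag}(u_0,u_1,\dots,u_n)$ for some numbers $u_0,\dots,u_n$ (i.e. the $n+1$ columns of $A$ are pairwise orthogonal).
   Context: An $n$-bit partial Boolean function is a map $f:D\to\{0,1\}$ with $D\subseteq\{0,1\}^n$; $\bar f(x)=1\oplus f(x)$ on $D$. For $x\in\{0,1\}^n$, $|F(x)\rangle_1=(1,(-1)^{x_1},\dots,(-1)^{x_n})^T$. A degree-1 SOS complex representation matrix of $f$ and $\bar f$ is a $(p+q)\times(n+1)$ complex matrix $A$ with rows $a^1,\dots,a^{p+q}\in\mathbb{C}^{n+1}$ (row vectors; columns indexed by $\emptyset,\{1\},\dots,\{n\}$) such that: $f(x)=\sum_{l=1}^p|a^l|F(x)\rangle_1|^2$ for all $x\in D$; $\sum_{l=1}^{p+q}|a^l|F(x)\rangle_1|^2=1$ for all $x\in\{0,1\}^n$; and hence $\bar f(x)=\sum_{l=p+1}^{p+q}|a^l|F(x)\rangle_1|^2$ for all $x\in D$. A quantum 1-query algorithm works in a finite-dimensional Hilbert space with orthonormal basis $\{|i,j'\rangle\}$, $i\in\{0,\dots,n\}$; the oracle is $O_x|i,j'\rangle=(-1)^{x_i}|i,j'\rangle$ for $i\ge 1$, $O_x|0,j'\rangle=|0,j'\rangle$; the algorithm applies input-independent unitaries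 $U_0,O_x,U_1$ to an initial state and performs a projective measurement with outcomes in $\{0,1\}$; it computes $f$ exactly if for every $x\in D$ the outcome is $f(x)$ with probability 1. *)

From HB Require Import structures.
From mathcomp Require Import all_boot all_order all_algebra.
From mathcomp Require Import reals complex.
Set Implicit Arguments.
Unset Strict Implicit.
Unset Printing Implicit Defensive.
Import Order.TTheory GRing.Theory Num.Theory.
Local Open Scope ring_scope.

Section Defs.
Variable R : realType.
Local Notation C := (R[i]).

Definition adj {m k : nat} (A : 'M[C]_(m, k)) : 'M[C]_(k, m) :=
  (map_mx Num.conj A)^T.

Definition sqnorm {d : nat} (v : 'cV[C]_d) : C := \sum_(k < d) `|v k 0| ^+ 2.

(* |F(x)>_1 = (1, (-1)^{x_1}, ..., (-1)^{x_n})^T, indices 0..n. *)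
Definition Fvec {n : nat} (x : {ffun 'I_n -> bool}) : 'cV[C]_(n.+1) :=
  \col_(i < n.+1) (if unlift ord0 i is Some j then (-1) ^+ (x j) else 1).

(* Degree-1 SOS complex representation matrix of f and \bar f:
   A has p + q rows a^1..a^(p+q); the first p rows are lshift q l (l < p). *)
Definition sos_rep1 (n : nat) (D : {set {ffun 'I_n -> bool}})
    (f : {ffun 'I_n -> bool} -> bool) (p q : nat) (A : 'M[C]_(p + q, n.+1)) :
    Prop :=
  (forall x, x \in D ->
     \sum_(l < p) `|(row (lshift q l) A *m Fvec x) 0 0| ^+ 2 = (f x)%:R)
  /\ (forall x : {ffun 'I_n -> bool},
     \sum_(l < p + q) `|(row l A *m Fvec x) 0 0| ^+ 2 = 1).

Definition unitary_mx {d : nat} (U : 'M[C]_d) : Prop := adj U *m U = 1%:M.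

Definition proj_meas01 {d : nat} (P : bool -> 'M[C]_d) : Prop :=
  (forall b, adj (P b) = P b) /\ (forall b, P b *m P b = P b)
  /\ P false + P true = 1%:M.

(* Oracle on the space with orthonormal basis |i,j'>, i < n+1, j' < m;
   |i,j'> is the standard basis vector with index mxvec_index i j'.
   O_x |i,j'> = (-1)^{x_i} |i,j'> for i >= 1, O_x |0,j'> = |0,j'>. *)
Definition oracle (n m : nat) (x : {ffun 'I_n -> bool}) : 'M[C]_(n.+1 * m) :=
  diag_mx (mxvec (\matrix_(i < n.+1, j < m) Fvec x i 0)).

Definition exact_1query (n : nat) (D : {set {ffun 'I_n -> bool}})
    (f : {ffun 'I_n -> bool} -> bool) : Prop :=
  exists (m : nat) (psi : 'cV[C]_(n.+1 * m)) (U0 U1 : 'M[C]_(n.+1 * m))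
         (P : bool -> 'M[C]_(n.+1 * m)),
    sqnorm psi = 1 /\ unitary_mx U0 /\ unitary_mx U1 /\ proj_meas01 P /\
    forall x, x \in D ->
      sqnorm (P (f x) *m (U1 *m (oracle m x *m (U0 *m psi)))) = 1.

End Defs.

From HB Require Import structures.
From mathcomp Require Import all_boot all_order all_algebra.
From mathcomp Require Import reals complex.
Import Order.TTheory GRing.Theory Num.Theory.
Local Open Scope ring_scope.
Set Implicit Arguments.
Unset Strict Implicit.
Unset Printing Implicit Defensive.

(* After the first unitary the algorithm holds a unit
   vector phi, and the oracle acts on it as O_x phi = Phi F(x), where column
   i of Phi is the part of phi in the block {|i,j'>}.  Distinct blocks are
   orthogonal, so adj Phi Phi is diagonal.  Stacking the two measurement
   branches, A = [P_1 U1 Phi; P_0 U1 Phi] has the same Gram matrix as Phi,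
   and certainty of the outcome f(x) says exactly that A represents f.

   Write A = W diag(s) with s_i the column norms, so W
   is a partial isometry.  Embed columns at |i,0> (isometry K) and rows at
   |0,l+1> (isometry J); V = J W K^* is a partial isometry with V^2 = 0,
   and its unitary dilation U1 maps K diag(F(x)) s to J A F(x).  Starting in
   K s, measuring the projector onto the first p rows of the J-block then
   outputs f(x) with certainty. *)

Section Adjoint.
Variable R : realType.
Local Notation C := (R[i]).

Lemma adjE m k (A : 'M[C]_(m, k)) i j : adj A i j = (A j i)^*.
Proof. by rewrite /adj !mxE. Qed.

Lemma adjM m k l (A : 'M[C]_(m, k)) (B : 'M[C]_(k, l)) :
  adj (A *m B) = adj B *m adj A.
Proof. by rewrite /adj map_mxM trmx_mul. Qed.

Lemma adjK m k (A : 'M[C]_(m, k)) : adj (adj A) = A.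
Proof. by apply/matrixP => i j; rewrite !adjE conjCK. Qed.

Lemma adjD m k (A B : 'M[C]_(m, k)) : adj (A + B) = adj A + adj B.
Proof. by apply/matrixP => i j; rewrite !mxE rmorphD. Qed.

Lemma adjB m k (A B : 'M[C]_(m, k)) : adj (A - B) = adj A - adj B.
Proof. by apply/matrixP => i j; rewrite !mxE rmorphB. Qed.

Lemma adj1 k : adj (1%:M : 'M[C]_k) = 1%:M.
Proof. by apply/matrixP => i j; rewrite adjE !mxE eq_sym rmorph_nat. Qed.

Lemma adj0 m k : adj (0 : 'M[C]_(m, k)) = 0.
Proof. by apply/matrixP => i j; rewrite adjE !mxE rmorph0. Qed.

Lemma adj_diag k (d : 'rV[C]_k) : adj (diag_mx d) = diag_mx (map_mx Num.conj d).
Proof. by rewrite /adj map_diag_mx tr_diag_mx. Qed.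

Lemma adj_col_mul m1 m2 k (X : 'M[C]_(m1, k)) (Y : 'M[C]_(m2, k)) :
  adj (col_mx X Y) *m col_mx X Y = adj X *m X + adj Y *m Y.
Proof. by rewrite /adj map_col_mx tr_col_mx mul_row_col. Qed.

End Adjoint.

Section Norms.
Variable R : realType.
Local Notation C := (R[i]).

Lemma sqnormE d (v : 'cV[C]_d) : sqnorm v = (adj v *m v) 0 0.
Proof. by rewrite /sqnorm mxE; apply: eq_bigr => k _; rewrite adjE normCK mulrC. Qed.

Lemma sqnorm_isometry d k (U : 'M[C]_(k, d)) (v : 'cV[C]_d) :
  adj U *m U = 1%:M -> sqnorm (U *m v) = sqnorm v.
Proof. by move=> HU; rewrite !sqnormE adjM mulmxA -(mulmxA (adj v)) HU mulmx1. Qed.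

Lemma sqnorm_col p q (a : 'cV[C]_p) (b : 'cV[C]_q) :
  sqnorm (col_mx a b) = sqnorm a + sqnorm b.
Proof. by rewrite !sqnormE adj_col_mul mxE. Qed.

Lemma sum_rows k d (A : 'M[C]_(k, d)) (v : 'cV[C]_d) :
  \sum_(l < k) `|(row l A *m v) 0 0| ^+ 2 = sqnorm (A *m v).
Proof. by apply: eq_bigr => l _; rewrite -row_mul mxE. Qed.

Lemma sum_rows_top p q d (X : 'M[C]_(p, d)) (Y : 'M[C]_(q, d)) (v : 'cV[C]_d) :
  \sum_(l < p) `|(row (lshift q l) (col_mx X Y) *m v) 0 0| ^+ 2
  = sqnorm (X *m v).
Proof. by rewrite -sum_rows; apply: eq_bigr => l _; rewrite rowKu. Qed.

End Norms.

Section Measurement.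
Variable R : realType.
Local Notation C := (R[i]).
Variables (d : nat) (P : bool -> 'M[C]_d).
Hypothesis HP : proj_meas01 P.

Lemma meas_gram k (X : 'M[C]_(d, k)) b :
  adj (P b *m X) *m (P b *m X) = adj X *m (P b *m X).
Proof. by case: HP => Hadj [Hidem _]; rewrite adjM Hadj -mulmxA (mulmxA (P b)) Hidem. Qed.

Lemma sqnorm_meas (v : 'cV[C]_d) :
  sqnorm (P false *m v) + sqnorm (P true *m v) = sqnorm v.
Proof.
case: HP => _ [_ Hsum].
rewrite !sqnormE !meas_gram.
have -> : forall X Y : 'M[C]_1, X 0 0 + Y 0 0 = (X + Y) 0 0 by move=> X Y; rewrite mxE.
by rewrite -mulmxDr -mulmxDl Hsum mul1mx.
Qed.

Lemma meas_certainE (v : 'cV[C]_d) b : sqnorm v = 1 ->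
  sqnorm (P b *m v) = 1 <-> sqnorm (P true *m v) = b%:R.
Proof.
move=> Hv; have Hs := sqnorm_meas v; rewrite Hv in Hs.
case: b => /=; first by [].
split=> H; move: Hs; rewrite H; last by rewrite addr0.
by move/(canRL (addKr 1)); rewrite addNr.
Qed.

End Measurement.

Lemma proj_meas_of (R : realType) d (Q : 'M[R[i]]_d) :
  adj Q = Q -> Q *m Q = Q ->
  proj_meas01 (fun b : bool => if b then Q else 1%:M - Q).
Proof.
move=> Hadj Hidem; split; [|split].
- by case; rewrite ?adjB ?adj1 Hadj.
- by case; rewrite // mulmxBl mul1mx mulmxBr mulmx1 Hidem subrr subr0.
- by rewrite subrK.
Qed.

Section Oracle.
Variables (R : realType) (n : nat).
Local Notation C := (R[i]).

Lemma Fvec_conjM (x : {ffun 'I_n -> bool}) i : (Fvec R x i 0)^* * Fvec R x i 0 = 1.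
Proof.
rewrite mxE; case: unliftP => [j _|_]; last by rewrite rmorph1 mulr1.
by case: (x j); rewrite ?expr1 ?expr0 ?rmorphN ?rmorph1 ?mulrNN mulr1.
Qed.

Lemma oracle_unitary m (x : {ffun 'I_n -> bool}) : unitary_mx (oracle R m x).
Proof.
rewrite /unitary_mx /oracle adj_diag mulmx_diag; apply/matrixP => r s.
by case/mxvec_indexP: r => a b; rewrite !mxE mxvecE mxE Fvec_conjM.
Qed.

End Oracle.

Section Forward.
Variables (R : realType) (n : nat).
Local Notation C := (R[i]).

(* The columns of [state_columns phi] are the restrictions of phi to the
   blocks {|i,j'> : j' < m}; the oracle multiplies block i by F(x)_i. *)
Definition state_columns m (phi : 'cV[C]_(n.+1 * m)) : 'M[C]_(n.+1 * m, n.+1) :=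
  \matrix_(r, i) (phi r 0 * mxvec (\matrix_(a < n.+1, b < m) ((a == i)%:R : C)) 0 r).

Lemma state_columnsE m (phi : 'cV[C]_(n.+1 * m)) a b i :
  state_columns phi (mxvec_index a b) i = phi (mxvec_index a b) 0 * (a == i)%:R.
Proof. by rewrite !mxE mxvecE mxE. Qed.

Lemma oracle_state m (phi : 'cV[C]_(n.+1 * m)) x :
  oracle R m x *m phi = state_columns phi *m Fvec R x.
Proof.
apply/matrixP => r j; rewrite ord1 {j} mul_diag_mx !mxE.
case/mxvec_indexP: r => a b; rewrite mxvecE mxE.
rewrite (bigD1 a) //= big1 => [|i /negbTE nia]; last first.
  by rewrite state_columnsE eq_sym nia mulr0 mul0r.
by rewrite state_columnsE eqxx mulr1 addr0 mulrC.
Qed.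

(* Distinct blocks are orthogonal, so the columns are pairwise orthogonal. *)
Lemma state_columns_diag m (phi : 'cV[C]_(n.+1 * m)) :
  is_diag_mx (adj (state_columns phi) *m state_columns phi).
Proof.
apply/is_diag_mxP => i k nik; rewrite mxE; apply: big1 => r _.
case/mxvec_indexP: r => a b; rewrite adjE !state_columnsE.
have [ai|nai] := eqVneq a i; last by rewrite mulr0 rmorph0 mul0r.
have nak : a != k by rewrite ai -(inj_eq val_inj).
by rewrite (negbTE nak) !mulr0.
Qed.

Lemma sos_of_exact_1query (D : {set {ffun 'I_n -> bool}})
    (f : {ffun 'I_n -> bool} -> bool) :
  exact_1query R D f ->
  exists (p q : nat) (A : 'M[C]_(p + q, n.+1)),
    sos_rep1 D f A /\ exists u : 'rV[C]_(n.+1), adj A *m A = diag_mx u.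
Proof.
move=> [m [psi [U0 [U1 [P [Hpsi [HU0 [HU1 [HP Hx]]]]]]]]].
set phi := U0 *m psi in Hx; set B := U1 *m state_columns phi.
have Hout x : U1 *m (oracle R m x *m phi) = B *m Fvec R x.
  by rewrite oracle_state mulmxA.
have Hunit x : sqnorm (B *m Fvec R x) = 1.
  by rewrite -Hout !sqnorm_isometry //; exact: oracle_unitary.
exists (n.+1 * m)%N, (n.+1 * m)%N, (col_mx (P true *m B) (P false *m B)).
split; [split|].
- move=> x xD; rewrite sum_rows_top -(mulmxA _ B).
  by apply/(meas_certainE HP _ (Hunit x)); rewrite -Hout; exact: Hx.
- move=> x; rewrite sum_rows mul_col_mx sqnorm_col -!(mulmxA _ B) addrC.
  by rewrite sqnorm_meas // Hunit.
have /diag_mxP [u Hu] := state_columns_diag phi; exists u.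
have [_ [_ Hsum]] := HP.
rewrite adj_col_mul !meas_gram // -mulmxDr -mulmxDl addrC Hsum mul1mx.
by rewrite /B adjM -mulmxA (mulmxA (adj U1)) HU1 mul1mx.
Qed.

End Forward.

Section BasisMaps.
Variables (R : realType) (d : nat).
Local Notation C := (R[i]).

Definition basis_map k (e : 'I_k -> 'I_d) : 'M[C]_(d, k) :=
  \matrix_(r, l) (r == e l)%:R.

Lemma basis_map_gram k1 k2 (e1 : 'I_k1 -> 'I_d) (e2 : 'I_k2 -> 'I_d) :
  adj (basis_map e1) *m basis_map e2 = \matrix_(i, j) (e1 i == e2 j)%:R.
Proof.
apply/matrixP => i j; rewrite !mxE; under eq_bigr do rewrite adjE !mxE conjC_nat.
rewrite (bigD1 (e1 i)) //= eqxx mul1r big1 ?addr0 // => r /negbTE ->.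
by rewrite mul0r.
Qed.

Lemma basis_map_isometry k (e : 'I_k -> 'I_d) :
  injective e -> adj (basis_map e) *m basis_map e = 1%:M.
Proof. by move=> inj_e; apply/matrixP => i j; rewrite basis_map_gram !mxE (inj_eq inj_e). Qed.

Lemma basis_map_orth k1 k2 (e1 : 'I_k1 -> 'I_d) (e2 : 'I_k2 -> 'I_d) :
  (forall i j, e1 i != e2 j) -> adj (basis_map e1) *m basis_map e2 = 0.
Proof. by move=> disj; apply/matrixP => i j; rewrite basis_map_gram !mxE (negbTE (disj i j)). Qed.

End BasisMaps.

Lemma mxvec_index_inj m k (i i' : 'I_m) (j j' : 'I_k) :
  mxvec_index i j = mxvec_index i' j' -> i = i' /\ j = j'.
Proof. by move/cast_ord_inj/enum_rank_inj => [-> ->]. Qed.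

Section ColumnNormalization.
Variables (R : realType) (k d : nat) (A : 'M[R[i]]_(k, d)) (u : 'rV[R[i]]_d).
Local Notation C := (R[i]).
Hypothesis HA : adj A *m A = diag_mx u.

Lemma gram_diagE i : u 0 i = \sum_l `|A l i| ^+ 2.
Proof.
have := congr1 (fun M : 'M[C]_d => M i i) HA; rewrite !mxE eqxx mulr1n => <-.
by apply: eq_bigr => l _; rewrite adjE normCK mulrC.
Qed.

Lemma sqnorm_orth_cols (v : 'cV[C]_d) :
  sqnorm (A *m v) = \sum_i u 0 i * `|v i 0| ^+ 2.
Proof.
rewrite sqnormE adjM -mulmxA (mulmxA (adj A)) HA mul_diag_mx mxE.
by apply: eq_bigr => i _; rewrite mxE adjE normCK mulrCA [_^* * _]mulrC.
Qed.

Definition col_norms : 'rV[C]_d := \row_i sqrtC (u 0 i).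
Definition col_support : 'rV[C]_d := \row_i (col_norms 0 i != 0)%:R.

Definition normalized : 'M[C]_(k, d) := \matrix_(l, i) (A l i / col_norms 0 i).

Lemma col_norms_ge0 i : 0 <= col_norms 0 i.
Proof. by rewrite mxE sqrtC_ge0 gram_diagE sumr_ge0 // => l _; rewrite exprn_ge0. Qed.

Lemma col_normsM i : col_norms 0 i * col_norms 0 i = u 0 i.
Proof. by rewrite mxE -expr2 sqrtCK. Qed.

(* A = W diag(s): zero columns of A have zero norm. *)
Lemma normalizedK : normalized *m diag_mx col_norms = A.
Proof.
apply/matrixP => l i; rewrite mul_mx_diag !mxE.
have [s0|sn0] := eqVneq (sqrtC (u 0 i)) 0; last by rewrite divfK.
have u0 : \sum_l `|A l i| ^+ 2 = 0 by rewrite -gram_diagE -col_normsM mxE s0 mulr0.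
have Al0 : `|A l i| ^+ 2 = 0.
  exact: (psumr_eq0P (fun l _ => exprn_ge0 2 (normr_ge0 (A l i))) u0).
by move/eqP: Al0; rewrite s0 mulr0 sqrf_eq0 normr_eq0 => /eqP ->.
Qed.

Lemma normalized_gram : adj normalized *m normalized = diag_mx col_support.
Proof.
apply/matrixP => i j; rewrite !mxE.
have Eij : \sum_l (A l i)^* * A l j = u 0 i *+ (i == j).
  have := congr1 (fun M : 'M[C]_d => M i j) HA; rewrite [in RHS]mxE mxE => <-.
  by apply: eq_bigr => l _; rewrite adjE.
have Hconj : (sqrtC (u 0 i))^* = sqrtC (u 0 i).
  by have := col_norms_ge0 i; rewrite mxE => /geC0_conj.
under eq_bigr do rewrite adjE !mxE rmorphM fmorphV /= Hconj mulrACA mulrC.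
rewrite -mulr_sumr Eij; have [<-|_] := eqVneq i j; last by rewrite !mulr0n mulr0.
have us : u 0 i = sqrtC (u 0 i) * sqrtC (u 0 i) by rewrite -expr2 sqrtCK.
rewrite !mulr1n; set s := sqrtC (u 0 i) in us *; rewrite us.
have [->|sn0] := eqVneq s 0; first by rewrite invr0 !mul0r.
by rewrite mulrACA mulVf // mul1r.
Qed.

Lemma normalized_support : normalized *m diag_mx col_support = normalized.
Proof.
apply/matrixP => l i; rewrite mul_mx_diag !mxE.
by have [->|_] := eqVneq (sqrtC (u 0 i)) 0; rewrite ?invr0 ?mulr0 ?mulr1.
Qed.

Lemma sqnorm_col_norms : sqnorm col_norms^T = \sum_i u 0 i.
Proof.
apply: eq_bigr => i _; rewrite [col_norms^T i 0]mxE.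
by rewrite ger0_norm ?col_norms_ge0 // expr2 col_normsM.
Qed.

End ColumnNormalization.

Section Dilation.
Variables (R : realType) (d : nat) (a : 'M[R[i]]_d).

(* For a partial isometry a with a^2 = 0, e = a a^* + a^* a projects onto
   the sum of its initial and final spaces, on which g = a + a^* is a
   self-adjoint unitary; completing g by the identity off that sum gives a
   unitary extending a on its initial space. *)
Definition dilation : 'M[R[i]]_d := 1%:M - (a *m adj a + adj a *m a) + (a + adj a).

Lemma dilation_adj : adj dilation = dilation.
Proof.
rewrite /dilation adjD adjB adj1 !adjD !adjM adjK.
by rewrite (addrC (adj a)).
Qed.

Hypotheses (a_partial : a *m adj a *m a = a) (a_nil : a *m a = 0).

Lemma dilation_unitary : unitary_mx dilation.
Proof.
rewrite /unitary_mx dilation_adj /dilation.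
set b := adj a; set e := a *m b + b *m a; set g := a + b.
have bab : b *m a *m b = b.
  by have := congr1 (@adj R d d) a_partial; rewrite !adjM adjK mulmxA.
have bb : b *m b = 0 by rewrite /b -adjM a_nil adj0.
have gg : g *m g = e by rewrite mulmxDl !mulmxDr a_nil bb add0r addr0.
have ge : g *m e = g.
  by rewrite mulmxDl !mulmxDr !mulmxA a_nil bb a_partial bab !mul0mx add0r addr0.
have eg : e *m g = g by rewrite -gg -mulmxA gg ge.
have ee : e *m e = e by rewrite -{1}gg -mulmxA ge gg.
have xx : (1%:M - e) *m (1%:M - e) = 1%:M - e.
  by rewrite mulmxBl mul1mx mulmxBr mulmx1 ee subrr subr0.
have xg : (1%:M - e) *m g = 0 by rewrite mulmxBl mul1mx eg subrr.
have gx : g *m (1%:M - e) = 0 by rewrite mulmxBr mulmx1 ge subrr.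
by rewrite mulmxDl (mulmxDr (1%:M - e)) (mulmxDr g) xx xg gx gg addr0 add0r subrK.
Qed.

End Dilation.

Section PrefixMeasurement.
Variable R : realType.
Local Notation C := (R[i]).

Lemma isometry_conj_proj N k (J : 'M[C]_(N, k)) (Q : 'M[C]_k) :
  adj J *m J = 1%:M -> adj Q = Q -> Q *m Q = Q ->
  adj (J *m Q *m adj J) = J *m Q *m adj J
  /\ (J *m Q *m adj J) *m (J *m Q *m adj J) = J *m Q *m adj J.
Proof.
move=> HJ HQ HQQ; split; first by rewrite !adjM adjK HQ mulmxA.
by rewrite !mulmxA -(mulmxA _ (adj J) J) HJ mulmx1 -(mulmxA J) HQQ.
Qed.

Definition prefix_proj p q : 'M[C]_(p + q) := diag_mx (\row_l (l < p)%N%:R).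

Lemma prefix_proj_adj p q : adj (prefix_proj p q) = prefix_proj p q.
Proof.
apply/matrixP => i j; rewrite adjE !mxE rmorphMn /= conjC_nat eq_sym.
by case: eqP => // ->.
Qed.

Lemma prefix_proj_idem p q : prefix_proj p q *m prefix_proj p q = prefix_proj p q.
Proof.
rewrite /prefix_proj mulmx_diag; congr diag_mx; apply/rowP => l; rewrite !mxE.
by case: (l < p)%N; rewrite ?mulr1 ?mulr0.
Qed.

Lemma sqnorm_prefix_proj p q (w : 'cV[C]_(p + q)) :
  sqnorm (prefix_proj p q *m w) = \sum_(l < p) `|w (lshift q l) 0| ^+ 2.
Proof.
rewrite /sqnorm big_split_ord /= [X in _ + X]big1 ?addr0 => [|l _]; last first.
  by rewrite mul_diag_mx !mxE /= ltnNge leq_addr mul0r normr0 expr0n.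
by apply: eq_bigr => l _; rewrite mul_diag_mx !mxE /= ltn_ord mul1r.
Qed.

End PrefixMeasurement.

Section Backward.
Variables (R : realType) (n p q : nat).
Variables (A : 'M[R[i]]_(p + q, n.+1)) (u : 'rV[R[i]]_(n.+1)).
Local Notation C := (R[i]).
Local Notation k := (p + q)%N.
Hypothesis HA : adj A *m A = diag_mx u.

(* The algorithm works with m = k + 1: column i of A is stored at |i,0>
   and row l of A at |0,l+1>. *)
Let K : 'M[C]_(n.+1 * k.+1, n.+1) := basis_map R (fun i => mxvec_index i ord0).
Let J : 'M[C]_(n.+1 * k.+1, k) :=
  basis_map R (fun l => mxvec_index ord0 (lift ord0 l)).
Let W : 'M[C]_(k, n.+1) := normalized A u.
Let V : 'M[C]_(n.+1 * k.+1) := J *m W *m adj K.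

Lemma K_isometry : adj K *m K = 1%:M.
Proof. by apply: basis_map_isometry => i j /mxvec_index_inj [->]. Qed.

Lemma J_isometry : adj J *m J = 1%:M.
Proof. by apply: basis_map_isometry => l l' /mxvec_index_inj [_ /lift_inj]. Qed.

Lemma JK_orth : adj J *m K = 0.
Proof.
apply: basis_map_orth => l i; apply/eqP => /mxvec_index_inj [_ /eqP].
by rewrite eq_sym (negbTE (neq_lift _ _)).
Qed.

Lemma oracle_K x : oracle R k.+1 x *m K = K *m diag_mx (Fvec R x)^T.
Proof.
apply/matrixP => r i; rewrite mul_diag_mx mul_mx_diag !mxE.
have [->|_] := eqVneq r (mxvec_index i ord0); last by rewrite mulr0 mul0r.
by rewrite mxvecE !mxE mulr1 mul1r.
Qed.

Lemma V_partial_isometry : V *m adj V *m V = V.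
Proof.
have VJ : adj V *m J = K *m adj W.
  by rewrite /V !adjM adjK !mulmxA -(mulmxA _ (adj J)) J_isometry mulmx1.
rewrite {3}/V !mulmxA -(mulmxA V) VJ mulmxA {1}/V -(mulmxA _ (adj K)) K_isometry.
by rewrite mulmx1 -(mulmxA _ (adj W)) normalized_gram // -(mulmxA J) normalized_support.
Qed.

Lemma V_nil : V *m V = 0.
Proof.
have KJ : adj K *m J = 0 by rewrite -[J]adjK -adjM JK_orth adj0.
by rewrite /V !mulmxA -(mulmxA _ (adj K) J) KJ mulmx0 !mul0mx.
Qed.

Lemma dilation_K : dilation V *m K = K - K *m diag_mx (col_support u) + J *m W.
Proof.
have VK : V *m K = J *m W by rewrite /V -mulmxA K_isometry mulmx1.
have aVK : adj V *m K = 0 by rewrite /V !adjM adjK -!mulmxA JK_orth !mulmx0.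
have aVJ : adj V *m J = K *m adj W.
  by rewrite /V !adjM adjK !mulmxA -(mulmxA _ (adj J)) J_isometry mulmx1.
rewrite /dilation mulmxDl mulmxBl mul1mx !mulmxDl.
rewrite -(mulmxA V) -(mulmxA (adj V)) aVK VK mulmx0 add0r addr0.
by rewrite mulmxA aVJ -mulmxA normalized_gram.
Qed.

Lemma final_state x :
  dilation V *m (oracle R k.+1 x *m (1%:M *m (K *m (col_norms u)^T)))
  = J *m (A *m Fvec R x).
Proof.
rewrite mul1mx (mulmxA (oracle R k.+1 x)) oracle_K -(mulmxA K) (mulmxA _ K).
rewrite dilation_K.
set t := diag_mx (Fvec R x)^T *m (col_norms u)^T.
have Qt : diag_mx (col_support u) *m t = t.
  apply/matrixP => i j; rewrite ord1 /t !mul_diag_mx !mxE.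
  by have [->|_] := eqVneq (sqrtC (u 0 i)) 0; rewrite ?mulr0 ?mul1r.
have Wt : W *m t = A *m Fvec R x.
  rewrite -(normalizedK HA) -mulmxA; congr (_ *m _).
  by apply/matrixP => i j; rewrite ord1 /t !mul_diag_mx !mxE mulrC.
by rewrite mulmxDl mulmxBl -(mulmxA K) Qt subrr add0r -(mulmxA J) Wt.
Qed.

Let Pt : 'M[C]_(n.+1 * k.+1) := J *m prefix_proj R p q *m adj J.

Lemma Pt_meas : proj_meas01 (fun b : bool => if b then Pt else 1%:M - Pt).
Proof.
have [Hadj Hidem] := isometry_conj_proj J_isometry (prefix_proj_adj R p q)
  (prefix_proj_idem R p q).
exact: proj_meas_of.
Qed.

Lemma sqnorm_Pt (w : 'cV[C]_k) :
  sqnorm (Pt *m (J *m w)) = \sum_(l < p) `|w (lshift q l) 0| ^+ 2.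
Proof.
rewrite -!mulmxA (mulmxA (adj J)) J_isometry mul1mx sqnorm_isometry ?J_isometry //.
exact: sqnorm_prefix_proj.
Qed.

Lemma exact_1query_of_sos (D : {set {ffun 'I_n -> bool}})
    (f : {ffun 'I_n -> bool} -> bool) :
  sos_rep1 D f A -> exact_1query R D f.
Proof.
move=> [Hf Htot].
have Hunit x : sqnorm (A *m Fvec R x) = 1 by rewrite -sum_rows Htot.
have Hu1 : \sum_i u 0 i = 1.
  rewrite -(Hunit [ffun => false]) (sqnorm_orth_cols HA).
  by apply: eq_bigr => i _; rewrite normCK [_ * _^*]mulrC Fvec_conjM mulr1.
exists k.+1, (K *m (col_norms u)^T), 1%:M, (dilation V).
exists (fun b : bool => if b then Pt else 1%:M - Pt).
split; [|split; [|split; [|split]]].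
- by rewrite sqnorm_isometry ?K_isometry // (sqnorm_col_norms HA).
- by rewrite /unitary_mx adj1 mul1mx.
- exact: dilation_unitary V_partial_isometry V_nil.
- exact: Pt_meas.
move=> x xD; rewrite final_state.
apply/(meas_certainE Pt_meas); first by rewrite sqnorm_isometry ?J_isometry.
rewrite /= sqnorm_Pt -(Hf x xD); apply: eq_bigr => l _.
by rewrite -row_mul [in RHS]mxE.
Qed.

End Backward.

Theorem theorem3 (R : realType) (n : nat) (D : {set {ffun 'I_n -> bool}})
    (f : {ffun 'I_n -> bool} -> bool)
    (nonconst : exists x y, [/\ x \in D, y \in D & f x != f y]) :
  exact_1query R D f <->
  exists (p q : nat) (A : 'M[R[i]]_(p + q, n.+1)),
    sos_rep1 D f A /\
    exists u : 'rV[R[i]]_(n.+1), adj A *m A = diag_mx u.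
Proof.
split; first exact: sos_of_exact_1query.
by move=> [p [q [A [HA [u Hu]]]]]; exact: (exact_1query_of_sos Hu HA).
Qed.
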